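(* Let $d\in\mathbb{N}$. Then for any integer $k\geq 19^{2d-1}+1$ and any step preserving continuous map $F\colon S_{\ell_\infty^k}\to S_{\ell_1^k}$ such that $F(1,\ldots,1)\neq F(-1,\ldots,-1)$, we have $\omega_F(\tfrac1d)\geq\tfrac12$. In particular, there is no sequence $(F_k\colon S_{\ell_\infty^k}\to S_{\ell_1^k})_{k=1}^\infty$ of equi-uniformly continuous step preserving homeomorphisms.
   Context: For $p\in\{1,\infty\}$, $S_{\ell_p^k}$ denotes the unit sphere of $\mathbb{R}^k$ with the $\ell_p$-norm. Writing $F=(F_i)_{i=1}^k$ for the coordinate functions, $F$ is step preserving if for all $x=(x_i)_{i=1}^k\in S_{\ell_\infty^k}$ and all $i,j\in\{1,\dots,k\}$, $x_i=x_j$ implies $F_i(x)=F_j(x)$. The modulus of uniform continuity of a map $F$ between metric spaces is $\omega_F(t)=\sup\{d(F(x),F(y)): d(x,y)\le t\}$. A sequence $(F_k)_k$ is equi-uniformly continuous if for every $\varepsilon>0$ there is $\delta>0$ with $\omega_{F_k}(\delta)<\varepsilon$ for all $k$. *)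

From HB Require Import structures.
From mathcomp Require Import all_boot all_order all_algebra.
From mathcomp Require Import all_classical all_reals ereal.
Unset Printing Implicit Defensive.
Import Order.TTheory GRing.Theory Num.Theory.
Local Open Scope classical_set_scope.
Local Open Scope ring_scope.

Section Defs.
Variable R : realType.

Definition vsub {k} (x y : 'I_k -> R) : 'I_k -> R := fun i => x i - y i.

Definition linf {k} (x : 'I_k -> R) : R := \big[Num.max/0]_(i < k) `|x i|.
Definition l1 {k} (x : 'I_k -> R) : R := \sum_(i < k) `|x i|.

Definition Sinf k : set ('I_k -> R) := [set x | linf x = 1].
Definition S1 k : set ('I_k -> R) := [set x | l1 x = 1].

(* F maps S_{l_inf^k} into S_{l_1^k} (values outside the sphere are irrelevant) *)
Definition maps_into {k} (F : ('I_k -> R) -> ('I_k -> R)) :=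
  forall x, Sinf k x -> S1 k (F x).

Definition cont_inf_1 {k} (F : ('I_k -> R) -> ('I_k -> R)) :=
  forall x, Sinf k x -> forall e : R, 0 < e -> exists2 delta : R, 0 < delta &
    forall y, Sinf k y -> linf (vsub x y) < delta -> l1 (vsub (F x) (F y)) < e.

Definition cont_1_inf {k} (G : ('I_k -> R) -> ('I_k -> R)) :=
  forall x, S1 k x -> forall e : R, 0 < e -> exists2 delta : R, 0 < delta &
    forall y, S1 k y -> l1 (vsub x y) < delta -> linf (vsub (G x) (G y)) < e.

Definition step_preserving {k} (F : ('I_k -> R) -> ('I_k -> R)) :=
  forall x, Sinf k x -> forall i j : 'I_k, x i = x j -> F x i = F x j.

Definition homeo {k} (F : ('I_k -> R) -> ('I_k -> R)) :=
  maps_into F /\ cont_inf_1 F /\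
  exists G : ('I_k -> R) -> ('I_k -> R),
    [/\ forall y, S1 k y -> Sinf k (G y),
        cont_1_inf G,
        forall x, Sinf k x -> G (F x) = x &
        forall y, S1 k y -> F (G y) = y].

Definition omega {k} (F : ('I_k -> R) -> ('I_k -> R)) (t : R) : \bar R :=
  ereal_sup [set r : \bar R | exists x y, [/\ Sinf k x, Sinf k y,
               linf (vsub x y) <= t & r = (l1 (vsub (F x) (F y)))%:E]].

End Defs.

Arguments vsub {R k}.
Arguments linf {R k}.
Arguments l1 {R k}.
Arguments Sinf {R}.
Arguments S1 {R}.
Arguments maps_into {R k}.
Arguments cont_inf_1 {R k}.
Arguments cont_1_inf {R k}.
Arguments step_preserving {R k}.
Arguments homeo {R k}.
Arguments omega {R k}.

(* Split the k coordinates into 2d blocks of geometrically growing size (each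
   block is at least 18 times as large as the previous one, and the last block
   holds at least 18/19 of all coordinates), and walk from (1,...,1) to
   (-1,...,-1) through points x_t of the l_inf sphere that are constant on
   blocks, consecutive points being 1/d apart.  Suppose omega_F(1/d) < 1/2.
   For each parity c, a point 1/d away from x_t merges every block of parity c
   whose value differs from that of the last block with the next block; there
   F, being step preserving, puts at most 1/18 of its mass on these lower
   blocks, so F(x_t) puts less than 1/4 + 1/18 on them.  Hence F(x_t) keeps at
   least 7/18 of its mass where it takes its value on the last block, so that
   value has modulus > 7/(18k), and since the last block is so large,
   consecutive F(x_t) cannot have opposite signs there.  Thus F(1,...,1) and
   F(-1,...,-1), constant vectors of l_1-norm 1 of the same sign, coincide.
   Homeomorphisms separate these two points, and taking d of order 1/delta
   rules out equi-uniformly continuous families. *)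

From HB Require Import structures.
From mathcomp Require Import all_boot all_order all_algebra.
From mathcomp Require Import all_classical all_reals ereal.
From mathcomp Require Import zify lra.
Set Implicit Arguments.
Unset Strict Implicit.
Unset Printing Implicit Defensive.

Import Order.TTheory GRing.Theory Num.Theory.

Section Staircase.
Variable d : nat.
Local Notation n := (2 * d - 1).

(* Level of block [g] at time [t]; the corresponding coordinate is
   [1 - level / d].  Until [t = n] the blocks above [t] descend together, then
   all levels rise in lockstep up to [2 * d]. *)
Definition stair t g := minn (2 * d) (minn g t + (t - n)).

Lemma stair_le t g : stair t g <= 2 * d.
Proof. rewrite /stair; lia. Qed.

Lemma stair_start g : stair 0 g = 0.
Proof. rewrite /stair; lia. Qed.

Lemma stair_end g : stair (n + 2 * d) g = 2 * d.
Proof. rewrite /stair; lia. Qed.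

Lemma stair_succt t g : stair t g <= stair t.+1 g <= (stair t g).+1.
Proof. rewrite /stair; lia. Qed.

Lemma stair_succg t g : stair t g <= stair t g.+1 <= (stair t g).+1.
Proof. rewrite /stair; lia. Qed.

Definition extreme_block t := if t <= n then 0 else n.

Lemma extreme_block_le t : extreme_block t <= n.
Proof. by rewrite /extreme_block; case: ifP. Qed.

Lemma stair_extreme t :
  stair t (extreme_block t) = 0 \/ stair t (extreme_block t) = 2 * d.
Proof. rewrite /extreme_block /stair; case: ifP; lia. Qed.

Definition off_top t g := stair t g != stair t n.

Definition pair_low t c g := off_top t g && (odd g == c).

(* When [pair_low t c g], blocks [g] and [g.+1] get a common level by moving
   one of them one step; the choice keeps [extreme_block t] in place. *)
Definition partner t c g :=
  if t <= n then (if (0 < g) && pair_low t c g.-1 then g.-1 else g)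
  else if pair_low t c g then g.+1 else g.

Definition merged t c g := stair t (partner t c g).

Lemma pair_low_lt t c g : pair_low t c g -> g < n.
Proof. rewrite /pair_low /off_top /stair => /andP[]; lia. Qed.

Lemma merged_le t c g : merged t c g <= 2 * d.
Proof. exact: stair_le. Qed.

Lemma merged_near t c g :
  merged t c g <= (stair t g).+1 /\ stair t g <= (merged t c g).+1.
Proof.
have := stair_succg t g; rewrite /merged /partner.
case: ifP => _; last by case: ifP; lia.
case: ifP => [/andP[g_gt0 _]|]; last by lia.
by have := stair_succg t g.-1; rewrite prednK //; lia.
Qed.

Lemma pair_low_succ t c g : pair_low t c g -> ~~ pair_low t c g.+1.
Proof. by rewrite /pair_low /= => /andP[_ /eqP <-]; case: (odd g); rewrite andbF. Qed.

Lemma merged_pair t c h : pair_low t c h -> merged t c h = merged t c h.+1.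
Proof.
move=> low; rewrite /merged /partner /= low (negbTE (pair_low_succ low)).
case: ifP => // _; case: (posnP h) => [-> //|h_gt0].
by case: (boolP (pair_low t c h.-1)) => [/pair_low_succ|]; rewrite ?prednK ?low.
Qed.

Lemma merged_extreme t c : merged t c (extreme_block t) = stair t (extreme_block t).
Proof.
rewrite /merged /partner /extreme_block; case: ifP => [-> //|->].
by rewrite /pair_low /off_top eqxx.
Qed.

End Staircase.

Definition block k (blk : 'I_k -> nat) h : pred 'I_k := fun i => blk i == h.

Lemma card_interval k a b : a <= b <= k -> #|[pred i : 'I_k | a <= i < b]| = b - a.
Proof.
move=> /andP[a_le_b b_le_k].
have widen : \sum_(a <= i < b) 1 = \sum_(0 <= i < k | a <= i < b) 1.
  by rewrite [LHS](big_nat_widenl a 0) // [LHS](big_nat_widen 0 b k).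
rewrite big_mkord in widen.
rewrite -sum1_card [LHS](_ : _ = \sum_(i < k | a <= i < b) 1) //.
by rewrite -widen sum_nat_const_nat muln1.
Qed.

Section GeometricBlocks.
Variables d k : nat.
Hypothesis d_gt0 : 0 < d.
Hypothesis k_big : 19 ^ (2 * d - 1) < k.
Local Notation n := (2 * d - 1).

Definition geom_blk (i : 'I_k) := minn n (up_log 19 i.+1).

Lemma geom_blk_le i : geom_blk i <= n.
Proof. exact: geq_minl. Qed.

Lemma exp19_lt h : h <= n -> 19 ^ h < k.
Proof. by move=> h_le; apply: leq_ltn_trans k_big; apply: leq_pexp2l. Qed.

Lemma geom_blk_small i h : geom_blk i = h -> h < n -> i < 19 ^ h.
Proof.
rewrite /geom_blk => blk_i h_lt.
have <- : up_log 19 i.+1 = h by lia.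
exact: up_logP.
Qed.

Lemma geom_blk_mid (i : 'I_k) h : h < n -> 19 ^ h <= i < 19 ^ h.+1 -> geom_blk i = h.+1.
Proof.
move=> h_lt /andP[lo hi]; rewrite /geom_blk (@up_log_eq 19 h i.+1) //; first lia.
by rewrite ltnS lo hi.
Qed.

Lemma geom_blk_top (i : 'I_k) : 19 ^ n.-1 <= i -> geom_blk i = n.
Proof.
move=> lo; rewrite /geom_blk; apply/minn_idPl; rewrite leqNgt; apply/negP => up_lt.
have : i.+1 <= 19 ^ up_log 19 i.+1 by apply: up_logP.
have : 19 ^ up_log 19 i.+1 <= 19 ^ n.-1 by apply: leq_pexp2l => //; lia.
lia.
Qed.

Lemma geom_k_gt0 : 0 < k. Proof. exact: leq_ltn_trans (leq0n _) k_big. Qed.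

Definition geom_top : 'I_k := Ordinal (etrans (ltn_predL k) geom_k_gt0).

Lemma geom_blk_geom_top : geom_blk geom_top = n.
Proof. by apply: geom_blk_top => /=; have := exp19_lt (leq_pred n); lia. Qed.

Lemma geom_blk_surj h : h <= n -> exists i, geom_blk i = h.
Proof.
case: h => [_|h h_lt]; first by exists (Ordinal geom_k_gt0); rewrite /geom_blk up_log1 minn0.
exists (Ordinal (exp19_lt (ltnW h_lt))); apply: geom_blk_mid => //=.
by rewrite leqnn ltn_exp2l ?ltnSn.
Qed.

Lemma geom_block_growth h : h < n ->
  18 * #|block geom_blk h| <= #|block geom_blk h.+1|.
Proof.
move=> h_lt; have pow_le h' : h' <= n -> 19 ^ h' <= k by move/exp19_lt/ltnW.
have small : #|block geom_blk h| <= 19 ^ h.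
  rewrite -[X in _ <= X]subn0 -(@card_interval k 0 (19 ^ h)); last first.
    by rewrite leq0n (pow_le _ (ltnW h_lt)).
  apply: subset_leq_card; apply/fintype.subsetP => i.
  by rewrite !unfold_in /block /= => /eqP /geom_blk_small; apply.
have large : 19 ^ h.+1 - 19 ^ h <= #|block geom_blk h.+1|.
  rewrite -(@card_interval k); last by rewrite (pow_le _ h_lt) andbT leq_exp2l.
  apply: subset_leq_card; apply/fintype.subsetP => i.
  by rewrite !unfold_in /block /= => mid; rewrite (geom_blk_mid h_lt mid).
by rewrite expnS in large; lia.
Qed.

Lemma geom_block_top : 18 * k <= 19 * #|block geom_blk n|.
Proof.
have pow_le : 19 ^ n.-1 <= k by apply/ltnW/exp19_lt/leq_pred.
have large : k - 19 ^ n.-1 <= #|block geom_blk n|.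
  rewrite -(@card_interval k) ?pow_le ?leqnn //.
  apply: subset_leq_card; apply/fintype.subsetP => i; rewrite !unfold_in /block /=.
  by case/andP => lo _; rewrite geom_blk_top.
have : 19 ^ n = 19 * 19 ^ n.-1 by rewrite -expnS prednK //; lia.
have := exp19_lt (leqnn n); lia.
Qed.

End GeometricBlocks.

Local Open Scope ring_scope.

Section Norms.
Variables (R : realType) (k : nat).
Implicit Types (u v x z : 'I_k -> R) (P Q : pred 'I_k).

Definition mass P z := \sum_(i in P) `|z i|.

Lemma l1_mass P z : l1 z = mass P z + mass (predC P) z.
Proof. by rewrite /l1 /mass (bigID P). Qed.

Lemma mass_ge0 P z : 0 <= mass P z.
Proof. exact: sumr_ge0. Qed.

Lemma mass_const P z a : (forall i, P i -> `|z i| = a) -> mass P z = a * #|P|%:R.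
Proof. by move=> za; rewrite /mass (eq_bigr (fun=> a)) ?sumr_const ?mulr_natr. Qed.

Lemma mass_diff_le P u v : l1 u = 1 -> l1 v = 1 ->
  (mass P u - mass P v) * 2 <= l1 (vsub u v).
Proof.
have dist Q : `|mass Q u - mass Q v| <= mass Q (vsub u v).
  rewrite /mass -sumrB; apply: le_trans (ler_norm_sum _ _ _) _.
  by apply: ler_sum => i _; apply: ler_dist_dist.
move=> u1 v1; move: (dist P) (dist (predC P)).
rewrite (l1_mass P (vsub u v)) !ler_norml.
have := l1_mass P u; have := l1_mass P v; rewrite u1 v1.
lra.
Qed.

Lemma mass_ratio P Q z j (a : nat) : Q j -> (forall i, P i || Q i -> z i = z j) ->
  (a * #|P| <= #|Q|)%N -> mass P z * a%:R <= mass Q z.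
Proof.
move=> Qj zE card.
rewrite (@mass_const P z `|z j|) => [|i Pi]; last by rewrite zE ?Pi.
rewrite (@mass_const Q z `|z j|) => [|i Qi]; last by rewrite zE ?Qi ?orbT.
by rewrite -mulrA -natrM ler_wpM2l // ler_nat mulnC.
Qed.

Lemma linf_le x (c : R) : 0 <= c -> (forall i, `|x i| <= c) -> linf x <= c.
Proof. by move=> c_ge0 xc; apply: bigmax_le. Qed.

Lemma le_linf x i : `|x i| <= linf x.
Proof. exact: le_bigmax. Qed.

End Norms.

Section Signs.
Variable R : realDomainType.
Implicit Types a b : R.

Lemma normB_sign_neq a b : (0 < a) != (0 < b) -> `|a - b| = `|a| + `|b|.
Proof.
case: (ltP 0 a) (ltP 0 b) => [a_gt0|a_le0] [b_gt0|b_le0] //= _.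
  by rewrite (gtr0_norm a_gt0) (ler0_norm b_le0) gtr0_norm; lra.
by rewrite (ler0_norm a_le0) (gtr0_norm b_gt0) ltr0_norm; lra.
Qed.

Lemma eq_norm_sign a b : `|a| = `|b| -> (0 < a) = (0 < b) -> a = b.
Proof.
move=> ab; case: (ltP 0 a) (ltP 0 b) => [a_gt0|a_le0] [b_gt0|b_le0] // _.
  by move: ab; rewrite (gtr0_norm a_gt0) (gtr0_norm b_gt0).
by move: ab; rewrite (ler0_norm a_le0) (ler0_norm b_le0) => /oppr_inj.
Qed.

End Signs.

Section Blocks.
Variables (R : realType) (d k : nat) (blk : 'I_k -> nat) (itop : 'I_k).
Local Notation n := (2 * d - 1)%N.

Hypothesis d_gt0 : (0 < d)%N.
Hypothesis blk_le : forall i, (blk i <= n)%N.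
Hypothesis blk_surj : forall h, (h <= n)%N -> exists i, blk i = h.
Hypothesis blk_itop : blk itop = n.
Hypothesis block_growth :
  forall h, (h < n)%N -> (18 * #|block blk h| <= #|block blk h.+1|)%N.
Hypothesis block_top : (18 * k <= 19 * #|block blk n|)%N.

Lemma mass_by_blocks (Q : pred nat) (z : 'I_k -> R) m : (n < m)%N ->
  mass (fun i => Q (blk i)) z = \sum_(0 <= h < m | Q h) mass (block blk h) z.
Proof.
move=> n_lt_m; rewrite /mass (exchange_big_dep (fun i => Q (blk i))) /=; last first.
  by move=> h i Qh /eqP ->.
apply: eq_bigr => i; rewrite unfold_in => Qi.
rewrite (eq_bigl (fun h => h == blk i)) => [|h].
  by rewrite big_nat1_eq /= (leq_ltn_trans (blk_le i)).
by rewrite unfold_in /block /=; case: (eqVneq h (blk i)) => [->|]; rewrite ?Qi ?andbF.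
Qed.

Definition level (lam : nat -> nat) : 'I_k -> R :=
  fun i => 1 - (lam (blk i))%:R / d%:R.

Lemma level_Sinf lam g : (forall h, lam h <= 2 * d)%N -> (g <= n)%N ->
  lam g = 0%N \/ lam g = (2 * d)%N -> Sinf k (level lam).
Proof.
move=> lam_le g_le lam_g; have d_pos : (0 : R) < d%:R by rewrite ltr0n.
have [i blk_i] := blk_surj g_le.
rewrite /Sinf /=; apply/le_anti/andP; split.
  apply: linf_le => // j; rewrite /level.
  have : (lam (blk j))%:R / d%:R <= (2 : R) by rewrite ler_pdivrMr // -natrM ler_nat.
  have : 0 <= (lam (blk j))%:R / (d%:R : R) by apply: divr_ge0.
  by rewrite ler_norml => *; apply/andP; split; lra.
apply: le_trans (le_linf _ i); rewrite /level blk_i.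
case: lam_g => ->; first by rewrite mul0r subr0 normr1.
rewrite natrM mulfK ?gt_eqF // (_ : 1 - 2 = -1) ?normrN ?normr1 //; lra.
Qed.

Lemma level_dist lam mu : (forall h, lam h <= (mu h).+1 /\ mu h <= (lam h).+1)%N ->
  linf (vsub (level lam) (level mu)) <= d%:R^-1.
Proof.
move=> near; have d_pos : (0 : R) < d%:R by rewrite ltr0n.
apply: linf_le => [|i]; first by rewrite invr_ge0 ltW.
rewrite /vsub /level (_ : _ - _ = ((mu (blk i))%:R - (lam (blk i))%:R) / d%:R); last first.
  by rewrite mulrBl; lra.
rewrite normrM normfV (gtr0_norm d_pos) ler_pdivrMr // mulVf ?gt_eqF //.
have [lam_le mu_le] := near (blk i).
have : ((lam (blk i))%:R : R) <= (mu (blk i))%:R + 1 by rewrite natr1 ler_nat.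
have : ((mu (blk i))%:R : R) <= (lam (blk i))%:R + 1 by rewrite natr1 ler_nat.
by rewrite ler_norml => *; apply/andP; split; lra.
Qed.

Definition stair_pt t := level (stair d t).
Definition merged_pt t c := level (merged d t c).

Lemma stair_pt_Sinf t : Sinf k (stair_pt t).
Proof. exact: level_Sinf (stair_le d t) (extreme_block_le d t) (stair_extreme d t). Qed.

Lemma merged_pt_Sinf t c : Sinf k (merged_pt t c).
Proof.
apply: level_Sinf (merged_le d t c) (extreme_block_le d t) _.
by rewrite merged_extreme; apply: stair_extreme.
Qed.

Lemma stair_merged_pt_dist t c : linf (vsub (stair_pt t) (merged_pt t c)) <= d%:R^-1.
Proof. by apply: level_dist => h; have [] := merged_near d t c h. Qed.

Lemma stair_pt_succ_dist t : linf (vsub (stair_pt t) (stair_pt t.+1)) <= d%:R^-1.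
Proof.
by apply: level_dist => h; have /andP[] := stair_succt d t h; split => //; apply: ltnW.
Qed.

Variable F : ('I_k -> R) -> 'I_k -> R.
Hypothesis F_sphere : maps_into F.
Hypothesis F_step : step_preserving F.
Hypothesis F_osc : forall x y, Sinf k x -> Sinf k y ->
  linf (vsub x y) <= d%:R^-1 -> l1 (vsub (F x) (F y)) < 2^-1.

Lemma F_level_eq lam i j : Sinf k (level lam) -> lam (blk i) = lam (blk j) ->
  F (level lam) i = F (level lam) j.
Proof. by move=> S_lam eq_ij; apply: F_step => //; rewrite /level eq_ij. Qed.

Lemma merged_block_dilution t c h : pair_low d t c h ->
  mass (block blk h) (F (merged_pt t c)) * 18 <=
  mass (block blk h.+1) (F (merged_pt t c)).
Proof.
move=> low; have h_lt := pair_low_lt low.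
have [j blk_j] := blk_surj h_lt.
apply: (mass_ratio (j := j)) (block_growth h_lt); first by rewrite /block /= blk_j.
move=> i /orP[] /eqP blk_i; apply: F_level_eq (merged_pt_Sinf t c) _.
  by rewrite blk_i blk_j (merged_pair low).
by rewrite blk_i blk_j.
Qed.

Lemma merged_pair_low_mass_le t c :
  mass (fun i => pair_low d t c (blk i)) (F (merged_pt t c)) * 18 <= 1.
Proof.
set z := F (merged_pt t c); pose S h := mass (block blk h) z.
have total : \sum_(0 <= h < n.+2) S h = 1.
  rewrite -(mass_by_blocks predT) //; have := F_sphere (merged_pt_Sinf t c).
  by rewrite /S1 /l1 /= => <-; apply: eq_bigl.
rewrite (mass_by_blocks _ _ (ltnSn n)) mulr_suml.
apply: (le_trans (y := \sum_(0 <= h < n.+1 | pair_low d t c h) S h.+1)).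
  by apply: ler_sum => h /merged_block_dilution.
apply: (le_trans (y := \sum_(0 <= h < n.+1) S h.+1)).
  rewrite [X in _ <= X](bigID (pair_low d t c)) /= lerDl.
  by apply: sumr_ge0 => h _; apply: mass_ge0.
by rewrite -total [X in _ <= X]big_nat_recl // lerDr mass_ge0.
Qed.

Lemma pair_low_mass_lt t c :
  mass (fun i => pair_low d t c (blk i)) (F (stair_pt t)) < 4^-1 + 18^-1.
Proof.
have := mass_diff_le (fun i => pair_low d t c (blk i))
  (F_sphere (stair_pt_Sinf t)) (F_sphere (merged_pt_Sinf t c)).
have := F_osc (stair_pt_Sinf t) (merged_pt_Sinf t c) (stair_merged_pt_dist t c).
have := merged_pair_low_mass_le t c.
lra.
Qed.

Lemma top_value_large t : 7 / 18 < `|F (stair_pt t) itop| * k%:R.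
Proof.
set x := stair_pt t; pose on_top i := ~~ off_top d t (blk i).
have on_top_mass : mass on_top (F x) <= `|F x itop| * k%:R.
  rewrite (@mass_const _ _ on_top (F x) `|F x itop|) => [|i /negPn /eqP top_i].
    by rewrite ler_wpM2l // ler_nat -[X in (_ <= X)%N]card_ord max_card.
  by rewrite -blk_itop in top_i; rewrite (F_level_eq (stair_pt_Sinf t) top_i).
have off_top_mass : mass (predC on_top) (F x) =
    mass (fun i => pair_low d t true (blk i)) (F x) +
    mass (fun i => pair_low d t false (blk i)) (F x).
  rewrite /mass (bigID (fun i => odd (blk i))) /=; congr (_ + _); apply: eq_bigl => i;
    by rewrite !unfold_in /= negbK /pair_low; case: (odd _); rewrite ?andbT ?andbF.
have sphere : l1 (F x) = 1 := F_sphere (stair_pt_Sinf t).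
have := l1_mass on_top (F x); rewrite sphere off_top_mass.
have := pair_low_mass_lt t true; have := pair_low_mass_lt t false.
lra.
Qed.

Lemma top_sign_succ t : (0 < F (stair_pt t) itop) = (0 < F (stair_pt t.+1) itop).
Proof.
set c := F (stair_pt t) itop; set c' := F (stair_pt t.+1) itop.
have top_block_diff :
    `|c - c'| * #|block blk n|%:R <= l1 (vsub (F (stair_pt t)) (F (stair_pt t.+1))).
  rewrite (l1_mass (block blk n)) (mass_const (a := `|c - c'|)) ?lerDl ?mass_ge0 // => i.
  rewrite /block /= -blk_itop => /eqP blk_i.
  by rewrite /vsub (F_level_eq (stair_pt_Sinf t) (congr1 _ blk_i))
    (F_level_eq (stair_pt_Sinf t.+1) (congr1 _ blk_i)).
(* Opposite signs would put the two images 14/19 > 1/2 apart on the last block. *)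
apply/eqP; apply: contraT => /normB_sign_neq c_c'; exfalso.
have := F_osc (stair_pt_Sinf t) (stair_pt_Sinf t.+1) (stair_pt_succ_dist t).
have := top_value_large t; have := top_value_large t.+1; rewrite -/c -/c'.
have : (`|c| + `|c'|) * (18 * k%:R) <= (`|c| + `|c'|) * (19 * #|block blk n|%:R).
  by rewrite ler_wpM2l ?addr_ge0 // -!natrM ler_nat.
rewrite c_c' in top_block_diff; lra.
Qed.

Lemma top_sign_start t : (0 < F (stair_pt t) itop) = (0 < F (stair_pt 0) itop).
Proof. by elim: t => // t IH; rewrite -top_sign_succ. Qed.

Lemma F_flat_image x : Sinf k x -> (forall i, x i = x itop) ->
  F x = (fun=> F x itop) /\ `|F x itop| * k%:R = 1.
Proof.
move=> Sx x_flat; have F_x_flat : F x = fun=> F x itop.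
  by apply: boolp.funext => i; apply: F_step.
split=> //; have : l1 (F x) = 1 := F_sphere Sx.
rewrite /l1 (eq_bigr (fun=> `|F x itop|)) => [|i _]; last by rewrite F_x_flat.
by rewrite sumr_const card_ord mulr_natr.
Qed.

Lemma F_const_images_eq : F (fun=> 1) = F (fun=> -1).
Proof.
have d_pos : (0 : R) < d%:R by rewrite ltr0n.
have k_pos : (0 : R) < k%:R by rewrite ltr0n (leq_ltn_trans (leq0n _) (ltn_ord itop)).
have pt_start : stair_pt 0 = fun=> 1.
  by apply: boolp.funext => i; rewrite /stair_pt /level stair_start mul0r subr0.
have pt_end : stair_pt (n + 2 * d) = fun=> -1.
  apply: boolp.funext => i; rewrite /stair_pt /level stair_end natrM mulfK ?gt_eqF //; lra.
have S_start := stair_pt_Sinf 0; rewrite pt_start in S_start.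
have S_end := stair_pt_Sinf (n + 2 * d); rewrite pt_end in S_end.
have [F_start start_norm] := F_flat_image S_start (fun=> erefl).
have [F_end end_norm] := F_flat_image S_end (fun=> erefl).
suff top_eq : F (fun=> 1) itop = F (fun=> -1) itop by rewrite F_start F_end top_eq.
apply: eq_norm_sign.
  by apply: (mulIf (lt0r_neq0 k_pos)); rewrite start_norm end_norm.
by rewrite -pt_start -pt_end (top_sign_start (n + 2 * d)).
Qed.

End Blocks.

Section Omega.
Variables (R : realType) (k : nat) (F : ('I_k -> R) -> 'I_k -> R).

Lemma l1_le_omega t x y : Sinf k x -> Sinf k y -> linf (vsub x y) <= t ->
  ((l1 (vsub (F x) (F y)))%:E <= omega F t)%E.
Proof. by move=> Sx Sy xy; apply: ereal_sup_ubound; exists x, y. Qed.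

Lemma le_omega s t : s <= t -> (omega F s <= omega F t)%E.
Proof.
move=> st; apply: ereal_sup_le => _ [x [y [Sx Sy xy ->]]].
by exists x, y; split => //; apply: le_trans st.
Qed.

Lemma Sinf_const (c : R) : (0 < k)%N -> `|c| = 1 -> Sinf k (fun=> c).
Proof.
move=> k_gt0 c1; rewrite /Sinf /=; apply/le_anti/andP; split.
  by apply: linf_le => // i; rewrite c1.
by rewrite -[X in X <= _]c1 (le_linf (fun=> c) (Ordinal k_gt0)).
Qed.

Lemma homeo_const_images_neq : (0 < k)%N -> homeo F -> F (fun=> 1) <> F (fun=> -1).
Proof.
move=> k_gt0 [_ [_ [G [_ _ GF _]]]] F_eq.
have S_one : Sinf k (fun=> 1 : R) by apply: Sinf_const; rewrite ?normr1.
have S_mone : Sinf k (fun=> -1 : R) by apply: Sinf_const; rewrite ?normrN ?normr1.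
have := congr1 G F_eq; rewrite !GF //.
by move/(congr1 (fun x => x (Ordinal k_gt0))) => /=; lra.
Qed.

End Omega.

Lemma omega_step_preserving_ge_half (R : realType) d k (F : ('I_k -> R) -> 'I_k -> R) :
  (0 < d)%N -> (19 ^ (2 * d - 1) < k)%N -> maps_into F -> step_preserving F ->
  F (fun=> 1) <> F (fun=> -1) -> ((2^-1)%:E <= omega F d%:R^-1)%E.
Proof.
move=> d_gt0 k_big F_sphere F_step F_ne; rewrite leNgt; apply/negP => small.
apply: F_ne; apply: (@F_const_images_eq R d k (@geom_blk d k) (geom_top k_big)) => //.
- exact: geom_blk_le.
- exact: geom_blk_surj.
- exact: geom_blk_geom_top.
- exact: geom_block_growth.
- exact: geom_block_top.
- move=> x y Sx Sy xy; rewrite -lte_fin.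
  exact: le_lt_trans (l1_le_omega F Sx Sy xy) small.
Qed.

Lemma no_equicontinuous_step_preserving_homeos (R : realType) :
  ~ (exists F : forall k : nat, ('I_k -> R) -> ('I_k -> R),
       (forall k : nat, (0 < k)%N -> step_preserving (F k) /\ homeo (F k)) /\
       (forall e : R, 0 < e -> exists2 delta : R, 0 < delta &
          forall k : nat, (0 < k)%N -> (omega (F k) delta < e%:E)%E)).
Proof.
move=> [F [F_homeo F_equi]].
have half_gt0 : (0 : R) < 2^-1 by rewrite invr_gt0.
have [delta delta_gt0 F_delta] := F_equi _ half_gt0.
pose d := (Num.truncn delta^-1).+1.
have d_delta : d%:R^-1 <= delta.
  rewrite -(invrK delta) lef_pV2 ?posrE ?invr_gt0 ?ltr0n //.
  exact/ltW/truncnS_gt.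
pose k := (19 ^ (2 * d - 1)).+1.
have [F_step F_homeo_k] := F_homeo k isT.
have [F_sphere _] := F_homeo_k.
have F_ne := homeo_const_images_neq (ltn0Sn _) F_homeo_k.
have ge_half :=
  omega_step_preserving_ge_half (isT : (0 < d)%N) (leqnn k) F_sphere F_step F_ne.
have := le_lt_trans (le_trans ge_half (le_omega (F k) d_delta)) (F_delta k isT).
by rewrite ltxx.
Qed.

Theorem theorem1p4 (R : realType) :
  (forall (d k : nat), (0 < d)%N -> ((19 ^ (2 * d - 1)).+1 <= k)%N ->
    forall F : ('I_k -> R) -> ('I_k -> R),
      maps_into F -> cont_inf_1 F -> step_preserving F ->
      F (fun _ => 1) <> F (fun _ => -1) ->
      (((2%:R)^-1)%:E <= omega F (d%:R)^-1)%E)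
  /\
  ~ (exists F : forall k : nat, ('I_k -> R) -> ('I_k -> R),
       (forall k : nat, (0 < k)%N -> step_preserving (F k) /\ homeo (F k)) /\
       (forall e : R, 0 < e -> exists2 delta : R, 0 < delta &
          forall k : nat, (0 < k)%N -> (omega (F k) delta < e%:E)%E)).
Proof.
split; last exact: no_equicontinuous_step_preserving_homeos.
move=> d k d_gt0 k_big F F_sphere _ F_step.
exact: omega_step_preserving_ge_half.
Qed.
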